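(* Let $r^*,\tilde r,\tau_0\in\mathbb R$ with $r^*<\tilde r$, and let $\psi$ be a solution of $\Box_g\psi=0$ on the Rindler spacetime whose data on $\Sigma^{r^*,\tilde r}_{\tau_0}$ (or on $\Sigma_{\tau_0}$) are compactly supported with respect to the regular coordinates $(U,V)$, and need not vanish at $\mathcal{RH}^+$. Then there is a constant $B$ such that for every $\tau_1\ge\tau_0$: \[ E^{\partial_\tau}[\Sigma^{r^*,\tilde r}_{\tau_1}]\le B\,E^{\partial_\tau}[\Sigma^{r^*,\tilde r}_{\tau_0}],\qquad E^{\partial_\tau}[\Sigma^{r^*}_{\tau_1}]\le B\,E^{\partial_\tau}[\Sigma^{r^*}_{\tau_0}], \] \[ E^{\partial_\tau}[\Sigma^{r^*,\tilde r}_{\tau_0}]\le B\,E^{\partial_\tau}[\Sigma^{r^*}_{\tau_0}],\qquad E^{\partial_\tau}[\Sigma^{r^*,\tilde r}_{\tau_1}]\le B\,E^{\partial_\tau}[\Sigma_{\tau_0}]. \]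
   Context: Fix $a>0$. The Rindler spacetime is $\mathcal M=\mathbb R^2_{(\tau,r)}$ with metric $g=e^{2ar}(-d\tau^2+dr^2)$. Null coordinates are $u=\tau-r$, $v=\tau+r$, so $g=-e^{a(v-u)}\,du\,dv$ and $\partial_\tau=\partial_u+\partial_v$. Via $t-x=U=-a^{-1}e^{-au}$ and $t+x=V=a^{-1}e^{av}$, $\mathcal M$ is isometric to the wedge $\{x>|t|\}$ of $1+1$ Minkowski space with $g=-dU\,dV$. The future Rindler horizon is $\mathcal{RH}^+=\{U=0,V>0\}$, corresponding to $u=+\infty$, and future null infinity $\mathcal I^+$ corresponds to $v\to\infty$. Stress-energy tensor: $T_{\mu\nu}(\psi)=\partial_\mu\psi\partial_\nu\psi-\tfrac12 g_{\mu\nu}g^{\alpha\beta}\partial_\alpha\psi\partial_\beta\psi$. For a vector field $V$, the current is $J^V_\mu=T_{\mu\nu}V^\nu$. Hypersurfaces, with their normals and induced volume forms: - $\Sigma_\tau=\{\tau=\text{const}\}$, with $n=e^{-ar}\partial_\tau$ and $\mathrm{dVol}=e^{ar}dr$; - $\mathcal C_u=\{u=\text{const}\}$, with $n=2e^{-a(v-u)}\partial_v$ and $\mathrm{dVol}=\tfrac12 e^{a(v-u)}dv$; - $\mathcal C_v=\{v=\text{const}\}$, with $n=2e^{-a(v-u)}\partial_u$ and $\mathrm{dVol}=\tfrac12 e^{a(v-u)}du$. For $r_1<r_2$ and $\tau_0\in\mathbb R$, define \[ \Sigma^{r_1,r_2}_{\tau_0}=\{\tau=\tau_0,\ r_1\le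 r\le r_2\}\cup\{v=\tau_0+r_1,\ u\ge\tau_0-r_1\}\cup\{u=\tau_0-r_2,\ v\ge \tau_0+r_2\} \] and \[ \Sigma^{r_1}_{\tau_0}=\{\tau=\tau_0,\ r\ge r_1\}\cup\{v=\tau_0+r_1,\ u\ge \tau_0-r_1\}. \] Each piece carries the normal and volume form listed above for its type. For a hypersurface $\Sigma$ made of such pieces, the energy is $E^V[\Sigma]=\int_\Sigma J^V_\mu n^\mu_\Sigma\,\mathrm{dVol}_\Sigma$. *)

From HB Require Import structures.
From mathcomp Require Import all_boot all_order all_algebra.
From mathcomp Require Import all_classical all_reals all_analysis.

Set Implicit Arguments.
Unset Strict Implicit.
Unset Printing Implicit Defensive.
Import Order.TTheory GRing.Theory Num.Theory.
Import numFieldNormedType.Exports.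
Local Open Scope classical_set_scope.
Local Open Scope ring_scope.

Section Rindler.
Variable R : realType.

(* Points of M are given by (tau, r); tangent vectors and covectors by their
   components (X^tau, X^r) in the coordinate basis (d_tau, d_r). *)
Definition vec := (R * R)%type.

Definition gmet (a tau r : R) (X Y : vec) : R :=
  expR (2 * a * r) * (- (X.1 * Y.1) + X.2 * Y.2).
Definition ginv (a tau r : R) (w z : vec) : R :=
  expR (- (2 * a * r)) * (- (w.1 * z.1) + w.2 * z.2).
(* components of the inverse metric g^{mu nu}, mu,nu in {tau (false), r (true)} *)
Definition ginv_comp (a tau r : R) (mu nu : bool) : R :=
  ginv a tau r (if mu then (0, 1) else (1, 0)) (if nu then (0, 1) else (1, 0)).
Definition sqrt_abs_det_g (a tau r : R) : R :=
  Num.sqrt `| gmet a tau r (1,0) (1,0) * gmet a tau r (0,1) (0,1)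
              - gmet a tau r (1,0) (0,1) * gmet a tau r (0,1) (1,0) |.

Definition d_tau (f : R -> R -> R) (tau r : R) : R := derive1 (fun t => f t r) tau.
Definition d_r (f : R -> R -> R) (tau r : R) : R := derive1 (fun s => f tau s) r.
Definition d_coord (mu : bool) (f : R -> R -> R) : R -> R -> R :=
  if mu then d_r f else d_tau f.

Definition jcont (f : R -> R -> R) : Prop :=
  continuous (fun p : R * R => f p.1 p.2).
Definition has_partials (f : R -> R -> R) : Prop :=
  forall tau r, derivable (fun t => f t r) tau 1 /\ derivable (fun s => f tau s) r 1.
Definition C2 (f : R -> R -> R) : Prop :=
  [/\ has_partials f, has_partials (d_tau f) & has_partials (d_r f)] /\
  [/\ jcont f, jcont (d_tau f) & jcont (d_r f)] /\
  [/\ jcont (d_tau (d_tau f)), jcont (d_r (d_tau f)),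
      jcont (d_tau (d_r f)) & jcont (d_r (d_r f))].

Definition box_g (a : R) (psi : R -> R -> R) (tau r : R) : R :=
  (sqrt_abs_det_g a tau r)^-1 *
  \sum_(mu <- [:: false; true]) \sum_(nu <- [:: false; true])
     d_coord mu (fun t s => sqrt_abs_det_g a t s * ginv_comp a t s mu nu
                              * d_coord nu psi t s) tau r.

Definition dpsi (psi : R -> R -> R) (tau r : R) : vec := (d_tau psi tau r, d_r psi tau r).
Definition act (w X : vec) : R := w.1 * X.1 + w.2 * X.2.

Definition Tse (a : R) (psi : R -> R -> R) (tau r : R) (X Y : vec) : R :=
  act (dpsi psi tau r) X * act (dpsi psi tau r) Y
  - 2^-1 * gmet a tau r X Y * ginv a tau r (dpsi psi tau r) (dpsi psi tau r).
Definition Jn (a : R) (psi : R -> R -> R) (V : R -> R -> vec) (tau r : R) (n : vec) : R :=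
  Tse a psi tau r (V tau r) n.

Definition dtau_field : R -> R -> vec := fun _ _ => (1, 0).
Definition du_vec : vec := (2^-1, - 2^-1).
Definition dv_vec : vec := (2^-1, 2^-1).
Definition scalev (c : R) (X : vec) : vec := (c * X.1, c * X.2).

(* null coordinates: u = tau - r, v = tau + r ; inverse: *)
Definition tau_of (u v : R) : R := (u + v) / 2.
Definition r_of (u v : R) : R := (v - u) / 2.

Definition U_of (a tau r : R) : R := - a^-1 * expR (- a * (tau - r)).
Definition V_of (a tau r : R) : R := a^-1 * expR (a * (tau + r)).

Local Notation leb := (@lebesgue_measure R).

(* piece of Sigma_tau, r ranging over D: n = e^{-ar} d_tau, dVol = e^{ar} dr *)
Definition E_slice (a : R) (psi : R -> R -> R) (V : R -> R -> vec) (tau : R)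
    (D : set R) : \bar R :=
  (\int[leb]_(r in D)
     (Jn a psi V tau r (scalev (expR (- (a * r))) (1, 0)) * expR (a * r))%:E)%E.
(* piece of C_v = {v = v0}, u >= u0 : n = 2e^{-a(v-u)} d_u, dVol = 1/2 e^{a(v-u)} du *)
Definition E_Cv (a : R) (psi : R -> R -> R) (V : R -> R -> vec) (v0 u0 : R) : \bar R :=
  (\int[leb]_(u in `[u0, +oo[)
     (Jn a psi V (tau_of u v0) (r_of u v0)
        (scalev (2 * expR (- (a * (v0 - u)))) du_vec)
      * (2^-1 * expR (a * (v0 - u))))%:E)%E.
(* piece of C_u = {u = u0}, v >= v0 : n = 2e^{-a(v-u)} d_v, dVol = 1/2 e^{a(v-u)} dv *)
Definition E_Cu (a : R) (psi : R -> R -> R) (V : R -> R -> vec) (u0 v0 : R) : \bar R :=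
  (\int[leb]_(v in `[v0, +oo[)
     (Jn a psi V (tau_of u0 v) (r_of u0 v)
        (scalev (2 * expR (- (a * (v - u0)))) dv_vec)
      * (2^-1 * expR (a * (v - u0))))%:E)%E.

Definition E_Sigma (a : R) psi V (tau0 : R) : \bar R := E_slice a psi V tau0 setT.
Definition E_Sigma12 (a : R) psi V (tau0 r1 r2 : R) : \bar R :=
  (E_slice a psi V tau0 `[r1, r2] + E_Cv a psi V (tau0 + r1) (tau0 - r1)
   + E_Cu a psi V (tau0 - r2) (tau0 + r2))%E.
Definition E_Sigma1 (a : R) psi V (tau0 r1 : R) : \bar R :=
  (E_slice a psi V tau0 `[r1, +oo[ + E_Cv a psi V (tau0 + r1) (tau0 - r1))%E.

(* Initial data compactly supported w.r.t. (U,V).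
   Data = psi on every piece, plus the normal derivative d_tau psi on the
   spacelike piece. Compact support: vanishing outside a box |U|,|V| <= C. *)
Definition data_cs_Sigma12 (a : R) (psi : R -> R -> R) (tau0 r1 r2 : R) : Prop :=
  exists C : R, forall tau r,
    (`|U_of a tau r| > C \/ `|V_of a tau r| > C) ->
    [/\ ((tau = tau0 /\ r1 <= r <= r2) -> psi tau r = 0 /\ d_tau psi tau r = 0),
        ((tau + r = tau0 + r1 /\ tau - r >= tau0 - r1) -> psi tau r = 0) &
        ((tau - r = tau0 - r2 /\ tau + r >= tau0 + r2) -> psi tau r = 0)].
Definition data_cs_Sigma (a : R) (psi : R -> R -> R) (tau0 : R) : Prop :=
  exists C : R, forall r,
    (`|U_of a tau0 r| > C \/ `|V_of a tau0 r| > C) ->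
    psi tau0 r = 0 /\ d_tau psi tau0 r = 0.

End Rindler.

From HB Require Import structures.
From mathcomp Require Import all_boot all_order all_algebra.
From mathcomp Require Import all_classical all_reals all_analysis.
From mathcomp Require Import measurable_realfun ring lra.

(* In the null coordinates [u = tau - r], [v = tau + r] the wave equation reads
   [d_u d_v psi = 0], so [d_u psi] depends on [u] alone and [d_v psi] on [v]
   alone: on [Sigma_tau] they are the values on [Sigma_0] translated by [tau].
   The flux of [J^{d_tau}] has density [(d_u psi)^2 + (d_v psi)^2] on a
   [tau]-slice, [(d_u psi)^2] on [C_v] and [(d_v psi)^2] on [C_u].  With
   [P, Q] the squares of [d_u psi, d_v psi] along [Sigma_0] as functions of [r],
   the energies become
     E[Sigma^{r1,r2}_tau] = int_{x <= r2 - tau} P + int_{x >= r1 + tau} Q,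
     E[Sigma^{r1}_tau]    = int P              + int_{x >= r1 + tau} Q,
     E[Sigma_tau]         = int P              + int Q,
   and every claimed inequality compares integrals of [P, Q >= 0] over nested
   domains, so [B = 1] works. *)

Set Implicit Arguments.
Unset Strict Implicit.
Unset Printing Implicit Defensive.
Import Order.TTheory GRing.Theory Num.Theory.
Import numFieldNormedType.Exports.
Local Open Scope classical_set_scope.
Local Open Scope ring_scope.

Section two_variable_calculus.
Variable R : realType.
Implicit Types (f fs ft fst fts : R -> R -> R) (g dg : R -> R) (a b c e h l x y : R).

Lemma jcont_near f x y e : jcont f -> 0 < e ->
  exists2 d, 0 < d &
    forall s t, `|s - x| < d -> `|t - y| < d -> `|f s t - f x y| < e.
Proof.
move=> /(_ (x, y)) /cvgrPdist_lt /[apply] /nbhs_ballP[d d0 fd].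
by exists d => // s t sx ty; rewrite distrC; apply: (fd (s, t)); split;
  rewrite /ball /= distrC.
Qed.

Lemma jcont_section f x : jcont f -> continuous (f x).
Proof.
by move=> cf y; apply: (cvg_comp _ _ (cvg_pair (cvg_cst x) cvg_id) (cf (x, y))).
Qed.

Lemma is_derive_quotientP g x l :
  is_derive x (1 : R) g l <-> (fun h => h^-1 * (g (h + x) - g x)) @ 0^' --> l.
Proof.
have -> : (fun h => h^-1 * (g (h + x) - g x)) =
          (fun h => h^-1 *: ((g \o shift x) (h *: 1) - g x)).
  by apply/funext => h; rewrite /= [h *: 1]mulr1.
split=> [[dg <-] | gl]; first exact: dg.
by apply: DeriveDef; [apply/cvg_ex; exists l | exact: cvg_lim].
Qed.

Lemma MVT_dist g dg a b : (forall z, is_derive z (1 : R) g (dg z)) ->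
  exists2 c, `|c - a| <= `|b - a| & g b - g a = dg c * (b - a).
Proof.
move=> gdg; have cg u v : {within `[u, v], continuous g}.
  apply: continuous_subspaceT => z.
  by apply/differentiable_continuous/derivable1_diffP; have [] := gdg z.
have [ab | ba] := leP a b.
  have [c /andP[ac cb] ->] := MVT_segment ab (fun z _ => gdg z) (cg a b).
  by exists c; rewrite // !ger0_norm ?subr_ge0 // lerD2r.
have [c /andP[bc ca] E] := MVT_segment (ltW ba) (fun z _ => gdg z) (cg b a).
exists c; last by rewrite -opprB E -mulrN opprB.
by rewrite distrC [X in _ <= X]distrC !ger0_norm ?subr_ge0 ?(ltW ba) // lerD2l lerN2.
Qed.

Definition second_difference f x y h :=
  f (x + h) (y + h) - f (x + h) y - f x (y + h) + f x y.

Lemma second_difference_swap f x y h :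
  second_difference (fun s t => f t s) y x h = second_difference f x y h.
Proof. by rewrite /second_difference; ring. Qed.

Lemma second_difference_mean f fs fst x y h :
  (forall s t, is_derive s (1 : R) (f ^~ t) (fs s t)) ->
  (forall s t, is_derive t (1 : R) (fs s) (fst s t)) ->
  exists s, exists2 t, `|s - x| <= `|h| /\ `|t - y| <= `|h| &
    second_difference f x y h = fst s t * h * h.
Proof.
move=> dfs dfst.
have dg z : is_derive z (1 : R) (fun s => f s (y + h) - f s y) (fs z (y + h) - fs z y).
  exact: is_deriveB.
have [s sx Es] := MVT_dist x (x + h) dg.
have [t ty Et] := MVT_dist y (y + h) (dfst s).
exists s, t; first by split; [move: sx | move: ty]; rewrite addrAC subrr add0r.
rewrite /second_difference.
have -> : f (x + h) (y + h) - f (x + h) y - f x (y + h) + f x y =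
  (f (x + h) (y + h) - f (x + h) y) - (f x (y + h) - f x y) by ring.
by rewrite Es Et; congr (_ * _ * _); ring.
Qed.

Lemma mixed_partials_eq f fs ft fst fts :
  (forall s t, is_derive s (1 : R) (f ^~ t) (fs s t)) ->
  (forall s t, is_derive t (1 : R) (f s) (ft s t)) ->
  (forall s t, is_derive t (1 : R) (fs s) (fst s t)) ->
  (forall s t, is_derive s (1 : R) (ft ^~ t) (fts s t)) ->
  jcont fst -> jcont fts -> forall x y, fst x y = fts x y.
Proof.
move=> dfs dft dfst dfts cfst cfts x y.
apply/eqP; rewrite -subr_eq0 -normr_le0; apply/ler_addgt0Pr => e e0; rewrite add0r.
have e2 : 0 < e / 2 by rewrite divr_gt0.
have [d1 d10 near1] := jcont_near x y cfst e2.
have [d2 d20 near2] := jcont_near x y cfts e2.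
have d0 : 0 < Num.min d1 d2 by rewrite lt_min d10 d20.
have dd1 : Num.min d1 d2 <= d1 by rewrite ge_min lexx.
have dd2 : Num.min d1 d2 <= d2 by rewrite ge_min lexx orbT.
pose h := Num.min d1 d2 / 2.
have [h0 hd1 hd2] : [/\ 0 < h, h < d1 & h < d2] by split; rewrite /h; lra.
have [s [t [sx ty] Efst]] := second_difference_mean x y h dfs dfst.
have [t' [s' [ty' sx'] Efts]] := second_difference_mean y x h
  (fun s t => dft t s) (fun s t => dfts t s).
rewrite second_difference_swap Efst in Efts.
rewrite (gtr0_norm h0) in sx ty sx' ty'.
have {}Efst : fst s t = fts s' t'.
  have hn0 : h != 0 by rewrite gt_eqF.
  by apply: (mulIf hn0); apply: (mulIf hn0).
have -> : fst x y - fts x y = - (fst s t - fst x y) + (fts s' t' - fts x y).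
  by rewrite Efst; ring.
apply: (le_trans (ler_normD _ _)); rewrite normrN [e in _ <= e](splitr e).
by apply: ltW; apply: ltrD; [apply: near1 | apply: near2]; lra.
Qed.

Lemma is_derive_affine x y c : is_derive x (1 : R) (fun s => y + c * s) c.
Proof.
have dZ : is_derive x (1 : R) (fun s => c * s) c.
  by have := @is_deriveZ _ _ _ id c x 1 1 (is_derive_id x 1); rewrite [c *: 1]mulr1.
by have := @is_deriveD _ _ _ (cst y) _ x 1 0 c (is_derive_cst y x 1) dZ; rewrite add0r.
Qed.

Lemma line_quotient_cvg f fs c x y :
  (forall s t, is_derive s (1 : R) (f ^~ t) (fs s t)) -> jcont fs ->
  (fun h => h^-1 * (f (x + h) (y + c * h) - f x (y + c * h))) @ 0^' --> fs x y.
Proof.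
move=> dfs cfs; apply/cvgrPdist_lt => e e0.
have [d d0 near_fs] := jcont_near x y cfs e0.
have c1 : 0 < 1 + `|c| by rewrite ltr_pwDl.
rewrite near_withinE; apply/nbhs_ballP.
exists (d / (1 + `|c|)); first by rewrite /= divr_gt0.
move=> h; rewrite /ball /= sub0r normrN ltr_pdivlMr // => hd hn0.
have [s sx ->] := MVT_dist x (x + h) (dfs ^~ (y + c * h)).
have hx : x + h - x = h by ring.
rewrite hx mulrCA mulVf // mulr1 in sx *.
have := normr_ge0 h; have := normr_ge0 c => c0 h0.
rewrite distrC; apply: near_fs; first by apply: (le_lt_trans sx); nra.
by rewrite (_ : y + c * h - y = c * h) ?normrM; [nra | ring].
Qed.

Lemma is_derive_along_line f fs ft c x y h0 :
  (forall s t, is_derive s (1 : R) (f ^~ t) (fs s t)) ->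
  (forall s t, is_derive t (1 : R) (f s) (ft s t)) -> jcont fs ->
  is_derive h0 (1 : R) (fun h => f (x + h) (y + c * h))
    (fs (x + h0) (y + c * h0) + c * ft (x + h0) (y + c * h0)).
Proof.
move=> dfs dft cfs; apply/is_derive_quotientP => /=.
set x' := x + h0; set y' := y + c * h0.
pose k s := f x' (y' + c * s).
have -> : (fun h => h^-1 * (f (x + (h + h0)) (y + c * (h + h0)) - f x' y')) =
  (fun h => h^-1 * (f (x' + h) (y' + c * h) - f x' (y' + c * h)) +
            h^-1 * (k (h + 0) - k 0)).
  apply/funext => h; rewrite /k addr0 mulr0 addr0.
  have -> : x + (h + h0) = x' + h by rewrite /x'; ring.
  have -> : y + c * (h + h0) = y' + c * h by rewrite /y'; ring.
  by ring.
apply: cvgD; first exact: line_quotient_cvg.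
apply/is_derive_quotientP; rewrite mulrC.
by apply: is_derive1_comp; [rewrite mulr0 addr0; exact: dft | exact: is_derive_affine].
Qed.

End two_variable_calculus.

Section Lebesgue_integrals_on_R.
Variable R : realType.
Local Notation mu := (@lebesgue_measure R).
Implicit Types (G : R -> R) (a b c : R).

Lemma continuous_measurable_EFin G (D : set R) :
  continuous G -> measurable_fun D (EFin \o G).
Proof.
move=> cG; apply/measurable_EFinP/measurable_funTS.
exact: continuous_measurable_fun.
Qed.

Lemma derive1_shift c : derive1 (shift c : R -> R) = cst 1.
Proof.
by apply/funext => x; rewrite derive1E; have [_ ->] := is_derive_shift x (1 : R) c.
Qed.

Lemma continuous_shift c : continuous (shift c : R -> R).
Proof.
move=> x; apply/differentiable_continuous/derivable1_diffP.
by have [] := is_derive_shift x (1 : R) c.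
Qed.

Lemma integral_itv_shift G a b c : a <= b -> continuous G ->
  (\int[mu]_(x in `[a, b]) (G (x + c)%R)%:E =
   \int[mu]_(x in `[(a + c)%R, (b + c)%R]) (G x)%:E)%E.
Proof.
move=> ab cG.
rewrite (@integration_by_substitution_increasing R (shift c) G a b) //.
- by apply: eq_integral => x _; rewrite derive1_shift /= mulr1.
- by move=> x y _ _; rewrite ltrD2r.
- by rewrite derive1_shift => x _; exact: cst_continuous.
- by rewrite derive1_shift; exact: is_cvg_cst.
- by rewrite derive1_shift; exact: is_cvg_cst.
- split; last 2 first.
  + exact/cvg_at_right_filter/continuous_shift.
  + exact/cvg_at_left_filter/continuous_shift.
  by move=> x _; have [] := is_derive_shift x (1 : R) c.
- exact: continuous_subspaceT.
Qed.

Lemma ge0_integral_itvy_shift G a c : continuous G -> (forall x, 0 <= G x) ->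
  (\int[mu]_(x in `[a, +oo[) (G (x + c)%R)%:E =
   \int[mu]_(x in `[(a + c)%R, +oo[) (G x)%:E)%E.
Proof.
move=> cG G0.
rewrite (@increasing_ge0_integration_by_substitutiony R (shift c) G a) //.
- by apply: eq_integral => x _; rewrite derive1_shift /= mulr1.
- by move=> x y _ _; rewrite ltrD2r.
- by rewrite derive1_shift => x _; exact: cst_continuous.
- by rewrite derive1_shift; exact: is_cvg_cst.
- by rewrite derive1_shift; exact: is_cvg_cst.
- split; last exact/cvg_at_right_filter/continuous_shift.
  by move=> x _; have [] := is_derive_shift x (1 : R) c.
- exact: cvg_addrr.
- exact: continuous_subspaceT.
Qed.

Lemma ge0_integral_shift G c : continuous G -> (forall x, 0 <= G x) ->
  (\int[mu]_x (G (x + c)%R)%:E = \int[mu]_x (G x)%:E)%E.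
Proof.
move=> cG G0.
rewrite (@increasing_ge0_integration_by_substitutionT R (shift c) G) //.
- by apply: eq_integral => x _; rewrite derive1_shift /= mulr1.
- by move=> x y; rewrite ltrD2r.
- by rewrite derive1_shift => x; exact: cst_continuous.
- by rewrite derive1_shift; exact: is_cvg_cst.
- by rewrite derive1_shift; exact: is_cvg_cst.
- exact: cvg_addrr_Ny.
- exact: cvg_addrr.
Qed.

Lemma ge0_integral_itv_split G (a b : itv_bound R) m :
  continuous G -> (forall x, 0 <= G x) -> (a <= BLeft m)%O -> (BLeft m <= b)%O ->
  (\int[mu]_(x in [set` Interval a b]) (G x)%:E =
   \int[mu]_(x in [set` Interval a (BLeft m)]) (G x)%:E +
   \int[mu]_(x in [set` Interval (BLeft m) b]) (G x)%:E)%E.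
Proof.
move=> cG G0 am mb.
rewrite (itv_bndbnd_setU am mb) ge0_integral_setU //.
- exact: continuous_measurable_EFin.
- by move=> x _; rewrite lee_fin.
rewrite disj_set2E; apply/eqP/seteqP; split => x //= [].
by rewrite !in_itv /= => /andP[_ xm] /andP[+ _]; rewrite leNgt xm.
Qed.

End Lebesgue_integrals_on_R.

Section null_fluxes.
Variable R : realType.
Local Notation mu := (@lebesgue_measure R).
Variables p q : R -> R.
Hypotheses (cp : continuous p) (cq : continuous q).
Hypotheses (p0 : forall x, 0 <= p x) (q0 : forall x, 0 <= q x).
Implicit Types tau : R.

Lemma ge0_integral_profilesD (D : set R) tau : measurable D ->
  (\int[mu]_(r in D) (p (r - tau) + q (r + tau))%:E =
   \int[mu]_(r in D) (p (r - tau))%:E + \int[mu]_(r in D) (q (r + tau))%:E)%E.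
Proof.
move=> mD; under eq_integral do rewrite EFinD.
have cpt : continuous (fun r => p (r - tau)).
  by move=> x; apply: continuous_comp; [exact: continuous_shift | exact: cp].
have cqt : continuous (fun r => q (r + tau)).
  by move=> x; apply: continuous_comp; [exact: continuous_shift | exact: cq].
rewrite ge0_integralD //; try exact: continuous_measurable_EFin.
all: by move=> x _; rewrite lee_fin.
Qed.

Lemma flux_Sigma12 tau (r1 r2 : R) : r1 <= r2 ->
  (\int[mu]_(r in `[r1, r2]) (p (r - tau) + q (r + tau))%:E
   + \int[mu]_(u in `[(tau - r1)%R, +oo[) (p (- u))%:E
   + \int[mu]_(v in `[(tau + r2)%R, +oo[) (q v)%:E =
   \int[mu]_(x in `]-oo, (r2 - tau)%R]) (p x)%:E
   + \int[mu]_(x in `[(r1 + tau)%R, +oo[) (q x)%:E)%E.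
Proof.
move=> r12.
rewrite ge0_integral_profilesD // !integral_itv_shift //.
rewrite -ge0_integration_by_substitutionNy; last 2 first.
- exact: continuous_subspaceT.
- by move=> x _.
rewrite opprB [(tau + r2)%R]addrC.
rewrite (ge0_integral_itv_split (a := -oo%O) (b := BRight (r2 - tau))
  (m := (r1 - tau)%R) cp p0) ?bnd_simp ?lerD2r //.
rewrite (ge0_integral_itv_split (a := BLeft (r1 + tau)) (b := +oo%O)
  (m := (r2 + tau)%R) cq q0) ?bnd_simp ?lerD2r //.
rewrite !integral_itv_bndo_bndc; try exact: continuous_measurable_EFin.
by rewrite [X in _ = X + _]addeC addeACA addeA.
Qed.

Lemma flux_Sigma1 tau (r1 : R) :
  (\int[mu]_(r in `[r1, +oo[) (p (r - tau) + q (r + tau))%:E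
   + \int[mu]_(u in `[(tau - r1)%R, +oo[) (p (- u))%:E =
   \int[mu]_x (p x)%:E + \int[mu]_(x in `[(r1 + tau)%R, +oo[) (q x)%:E)%E.
Proof.
rewrite ge0_integral_profilesD // !ge0_integral_itvy_shift //.
rewrite -ge0_integration_by_substitutionNy; last 2 first.
- exact: continuous_subspaceT.
- by move=> x _.
rewrite opprB -set_itvNyy.
rewrite (ge0_integral_itv_split (a := -oo%O) (b := +oo%O) (m := (r1 - tau)%R) cp p0) //.
rewrite integral_itv_bndo_bndc; last exact: continuous_measurable_EFin.
by rewrite [X in _ = X + _]addeC addeAC.
Qed.

Lemma flux_Sigma tau :
  (\int[mu]_r (p (r - tau) + q (r + tau))%:E =
   \int[mu]_x (p x)%:E + \int[mu]_x (q x)%:E)%E.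
Proof. by rewrite ge0_integral_profilesD // !ge0_integral_shift. Qed.

Lemma le_integral_profiles (A A' B B' : set R) :
  measurable A -> measurable A' -> measurable B -> measurable B' ->
  A `<=` A' -> B `<=` B' ->
  (\int[mu]_(x in A) (p x)%:E + \int[mu]_(x in B) (q x)%:E <=
   \int[mu]_(x in A') (p x)%:E + \int[mu]_(x in B') (q x)%:E)%E.
Proof.
move=> mA mA' mB mB' AA' BB'.
apply: leeD; apply: ge0_subset_integral => //;
  by [exact: continuous_measurable_EFin | move=> x _; rewrite lee_fin].
Qed.

End null_fluxes.

Section Rindler_wave_equation.
Variable R : realType.
Implicit Types (psi f : R -> R -> R) (a c r s t tau u v x : R).

Lemma is_derive_d_tau f t r : has_partials f ->
  is_derive t (1 : R) (f ^~ r) (d_tau f t r).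
Proof. by move=> /(_ t r)[df _]; rewrite /d_tau derive1E; exact: derivableP. Qed.

Lemma is_derive_d_r f t r : has_partials f -> is_derive r (1 : R) (f t) (d_r f t r).
Proof. by move=> /(_ t r)[_ df]; rewrite /d_r derive1E; exact: derivableP. Qed.

Lemma sqrt_abs_det_gE a t s : sqrt_abs_det_g a t s = expR (2 * a * s).
Proof.
rewrite /sqrt_abs_det_g /gmet /=.
rewrite (_ : _ - _ = - expR (2 * a * s) ^+ 2); last by ring.
by rewrite normrN ger0_norm ?sqr_ge0 // sqrtr_sqr ger0_norm // expR_ge0.
Qed.

Lemma box_gE a psi tau r : has_partials (d_tau psi) ->
  box_g a psi tau r =
  (expR (2 * a * r))^-1 * (d_r (d_r psi) tau r - d_tau (d_tau psi) tau r).
Proof.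
move=> hpt; rewrite /box_g !big_cons !big_nil /= sqrt_abs_det_gE.
have e0 s : expR (2 * a * s) != 0 by rewrite gt_eqF ?expR_gt0.
have flux_tt : (fun t s => sqrt_abs_det_g a t s * ginv_comp a t s false false
                           * d_tau psi t s) = (fun t s => - d_tau psi t s).
  apply/funext => t; apply/funext => s.
  by rewrite sqrt_abs_det_gE /ginv_comp /ginv /= expRN; field; exact: e0.
have flux_r (b : bool) : (fun t s => sqrt_abs_det_g a t s * ginv_comp a t s b (~~ b)
                           * d_coord (~~ b) psi t s) = (fun _ _ => 0).
  by apply/funext => t; apply/funext => s; rewrite /ginv_comp /ginv; case: b => /=; ring.
have flux_rr : (fun t s => sqrt_abs_det_g a t s * ginv_comp a t s true true
                           * d_r psi t s) = d_r psi.
  apply/funext => t; apply/funext => s.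
  by rewrite sqrt_abs_det_gE /ginv_comp /ginv /= expRN; field; exact: e0.
rewrite flux_tt (flux_r false) (flux_r true) flux_rr /d_tau /d_r /=.
rewrite !derive1_cst (derive1N (hpt tau r).1).
by rewrite !(addr0, add0r) addrC.
Qed.

Lemma wave_eq_flat a psi : has_partials (d_tau psi) ->
  (forall tau r, box_g a psi tau r = 0) ->
  forall tau r, d_tau (d_tau psi) tau r = d_r (d_r psi) tau r.
Proof.
move=> hpt box0 tau r; apply/eqP; rewrite eq_sym -subr_eq0.
have := box0 tau r; rewrite box_gE // => /eqP.
by rewrite mulf_eq0 invr_eq0 gt_eqF ?expR_gt0.
Qed.

Lemma r_of_sub_tau_of u v : r_of u v - tau_of u v = - u.
Proof. by rewrite /tau_of /r_of; field. Qed.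

Lemma r_of_add_tau_of u v : r_of u v + tau_of u v = v.
Proof. by rewrite /tau_of /r_of; field. Qed.

Lemma Jn_slice_null a psi tau r :
  Jn a psi (@dtau_field R) tau r (scalev (expR (- (a * r))) (1, 0)) * expR (a * r) =
  ((d_tau psi tau r - d_r psi tau r) / 2) ^+ 2 +
  ((d_tau psi tau r + d_r psi tau r) / 2) ^+ 2.
Proof.
rewrite /Jn /Tse /act /dpsi /gmet /ginv /scalev /dtau_field /= !expRN.
have e1 : expR (a * r) != 0 by rewrite gt_eqF ?expR_gt0.
have e2 : expR (2 * a * r) != 0 by rewrite gt_eqF ?expR_gt0.
by field; rewrite e1 e2.
Qed.

Lemma Jn_Cv_null a psi u v :
  Jn a psi (@dtau_field R) (tau_of u v) (r_of u v)
     (scalev (2 * expR (- (a * (v - u)))) (@du_vec R)) * (2^-1 * expR (a * (v - u))) =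
  ((d_tau psi (tau_of u v) (r_of u v) - d_r psi (tau_of u v) (r_of u v)) / 2) ^+ 2.
Proof.
rewrite /Jn /Tse /act /dpsi /gmet /ginv /scalev /dtau_field /du_vec /= !expRN.
have e1 : expR (a * (v - u)) != 0 by rewrite gt_eqF ?expR_gt0.
have e2 : expR (2 * a * r_of u v) != 0 by rewrite gt_eqF ?expR_gt0.
by field; rewrite e1 e2.
Qed.

Lemma Jn_Cu_null a psi u v :
  Jn a psi (@dtau_field R) (tau_of u v) (r_of u v)
     (scalev (2 * expR (- (a * (v - u)))) (@dv_vec R)) * (2^-1 * expR (a * (v - u))) =
  ((d_tau psi (tau_of u v) (r_of u v) + d_r psi (tau_of u v) (r_of u v)) / 2) ^+ 2.
Proof.
rewrite /Jn /Tse /act /dpsi /gmet /ginv /scalev /dtau_field /dv_vec /= !expRN.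
have e1 : expR (a * (v - u)) != 0 by rewrite gt_eqF ?expR_gt0.
have e2 : expR (2 * a * r_of u v) != 0 by rewrite gt_eqF ?expR_gt0.
by field; rewrite e1 e2.
Qed.

(* [null_profile psi 1 x] and [null_profile psi (-1) x] are [(d_u psi)^2] and
   [(d_v psi)^2] at the point [r = x] of [Sigma_0]. *)
Definition null_profile psi c x := ((d_tau psi 0 x - c * d_r psi 0 x) / 2) ^+ 2.

Lemma continuous_null_profile psi c :
  jcont (d_tau psi) -> jcont (d_r psi) -> continuous (null_profile psi c).
Proof.
move=> ct cr; have cl : continuous (fun x => (d_tau psi 0 x - c * d_r psi 0 x) / 2).
  move=> x; apply: cvgM; last exact: cvg_cst.
  by apply: cvgB; [|apply: cvgM; [exact: cvg_cst|]]; exact: jcont_section.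
move=> x; rewrite /continuous_at /null_profile.
by under eq_fun do rewrite expr2; rewrite expr2; apply: cvgM; exact: cl.
Qed.

End Rindler_wave_equation.

Section wave_solution.
Variables (R : realType) (a : R) (psi : R -> R -> R).
Hypotheses (psi_C2 : C2 psi) (psi_wave : forall tau r, box_g a psi tau r = 0).
Local Notation leb := (@lebesgue_measure R).

Let hp : has_partials psi. Proof. by case: psi_C2 => -[]. Qed.
Let hpt : has_partials (d_tau psi). Proof. by case: psi_C2 => -[]. Qed.
Let hpr : has_partials (d_r psi). Proof. by case: psi_C2 => -[]. Qed.
Let ct : jcont (d_tau psi). Proof. by case: psi_C2 => _ [[]]. Qed.
Let cr : jcont (d_r psi). Proof. by case: psi_C2 => _ [[]]. Qed.
Let ctt : jcont (d_tau (d_tau psi)). Proof. by case: psi_C2 => _ [_ []]. Qed.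
Let crt : jcont (d_r (d_tau psi)). Proof. by case: psi_C2 => _ [_ []]. Qed.
Let ctr : jcont (d_tau (d_r psi)). Proof. by case: psi_C2 => _ [_ []]. Qed.
Let wave := wave_eq_flat hpt psi_wave.
Let cP := continuous_null_profile (c := 1) ct cr.
Let cQ := continuous_null_profile (c := -1) ct cr.
Let P0 x : 0 <= null_profile psi 1 x := sqr_ge0 _.
Let Q0 x : 0 <= null_profile psi (-1) x := sqr_ge0 _.

Lemma d_r_d_tauC tau r : d_r (d_tau psi) tau r = d_tau (d_r psi) tau r.
Proof.
apply: (mixed_partials_eq (f := psi)) => // s t;
  by [exact: is_derive_d_tau | exact: is_derive_d_r].
Qed.

(* The derivative of [d_tau psi - c d_r psi] along [(1, c)] is
   [psi_tautau - c^2 psi_rr + c (psi_rtau - psi_taur)]. *)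
Lemma null_transport c x y h : c ^+ 2 = 1 ->
  d_tau psi (x + h) (y + c * h) - c * d_r psi (x + h) (y + c * h) =
  d_tau psi x y - c * d_r psi x y.
Proof.
move=> c2.
pose F h := d_tau psi (x + h) (y + c * h) - c * d_r psi (x + h) (y + c * h).
have dF h' : is_derive h' (1 : R) F 0.
  have dtau := is_derive_along_line c x y h' (fun s t => is_derive_d_tau s t hpt)
    (fun s t => is_derive_d_r s t hpt) ctt.
  have dr := is_derive_along_line c x y h' (fun s t => is_derive_d_tau s t hpr)
    (fun s t => is_derive_d_r s t hpr) ctr.
  apply: is_derive_eq (is_deriveB dtau (is_deriveZ c dr)) _.
  rewrite wave d_r_d_tauC [c *: _]/GRing.scale /=.
  have -> : forall A B : R, A + c * B - c * (B + c * A) = (1 - c ^+ 2) * A.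
    by move=> A B; ring.
  by rewrite c2 subrr mul0r.
by have := is_derive_0_is_cst h 0 dF; rewrite /F addr0 mulr0 addr0.
Qed.

Lemma null_profile_transport c tau r : c ^+ 2 = 1 ->
  ((d_tau psi tau r - c * d_r psi tau r) / 2) ^+ 2 = null_profile psi c (r - c * tau).
Proof.
by move=> c2; rewrite /null_profile -(null_transport 0 (r - c * tau) tau c2) add0r subrK.
Qed.

Lemma u_profile_transport tau r :
  ((d_tau psi tau r - d_r psi tau r) / 2) ^+ 2 = null_profile psi 1 (r - tau).
Proof. by have := null_profile_transport tau r (expr1n _ 2); rewrite !mul1r. Qed.

Lemma v_profile_transport tau r :
  ((d_tau psi tau r + d_r psi tau r) / 2) ^+ 2 = null_profile psi (-1) (r + tau).
Proof.
have c2 : (-1 : R) ^+ 2 = 1 by rewrite sqrrN expr1n.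
by have := null_profile_transport tau r c2; rewrite !mulN1r !opprK.
Qed.

Lemma E_slice_null tau (D : set R) :
  E_slice a psi (@dtau_field R) tau D =
  (\int[leb]_(r in D)
     (null_profile psi 1 (r - tau) + null_profile psi (-1) (r + tau))%:E)%E.
Proof.
apply: eq_integral => r _.
by rewrite Jn_slice_null u_profile_transport v_profile_transport.
Qed.

Lemma E_Cv_null v0 u0 :
  E_Cv a psi (@dtau_field R) v0 u0 =
  (\int[leb]_(u in `[u0, +oo[) (null_profile psi 1 (- u))%:E)%E.
Proof.
by apply: eq_integral => u _; rewrite Jn_Cv_null u_profile_transport r_of_sub_tau_of.
Qed.

Lemma E_Cu_null u0 v0 :
  E_Cu a psi (@dtau_field R) u0 v0 =
  (\int[leb]_(v in `[v0, +oo[) (null_profile psi (-1) v)%:E)%E.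
Proof.
by apply: eq_integral => v _; rewrite Jn_Cu_null v_profile_transport r_of_add_tau_of.
Qed.

Lemma E_Sigma12_null tau (r1 r2 : R) : r1 <= r2 ->
  E_Sigma12 a psi (@dtau_field R) tau r1 r2 =
  (\int[leb]_(x in `]-oo, (r2 - tau)%R]) (null_profile psi 1 x)%:E +
   \int[leb]_(x in `[(r1 + tau)%R, +oo[) (null_profile psi (-1) x)%:E)%E.
Proof.
move=> r12; rewrite /E_Sigma12 E_slice_null E_Cv_null E_Cu_null.
exact: (flux_Sigma12 cP cQ P0 Q0 tau r12).
Qed.

Lemma E_Sigma1_null tau (r1 : R) :
  E_Sigma1 a psi (@dtau_field R) tau r1 =
  (\int[leb]_x (null_profile psi 1 x)%:E +
   \int[leb]_(x in `[(r1 + tau)%R, +oo[) (null_profile psi (-1) x)%:E)%E.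
Proof.
rewrite /E_Sigma1 E_slice_null E_Cv_null.
exact: (flux_Sigma1 cP cQ P0 Q0 tau r1).
Qed.

Lemma E_Sigma_null tau :
  E_Sigma a psi (@dtau_field R) tau =
  (\int[leb]_x (null_profile psi 1 x)%:E + \int[leb]_x (null_profile psi (-1) x)%:E)%E.
Proof. by rewrite /E_Sigma E_slice_null; exact: (flux_Sigma cP cQ P0 Q0 tau). Qed.

End wave_solution.

Theorem proposition3p1 (R : realType) (a : R) (ha : 0 < a)
    (rs rt tau0 : R) (psi : R -> R -> R) :
  rs < rt ->
  C2 psi ->
  (forall tau r, box_g a psi tau r = 0) ->
  (data_cs_Sigma12 a psi tau0 rs rt \/ data_cs_Sigma a psi tau0) ->
  exists B : R, forall tau1 : R, tau0 <= tau1 ->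
    [/\ (E_Sigma12 a psi (@dtau_field R) tau1 rs rt
           <= B%:E * E_Sigma12 a psi (@dtau_field R) tau0 rs rt)%E,
        (E_Sigma1 a psi (@dtau_field R) tau1 rs
           <= B%:E * E_Sigma1 a psi (@dtau_field R) tau0 rs)%E,
        (E_Sigma12 a psi (@dtau_field R) tau0 rs rt
           <= B%:E * E_Sigma1 a psi (@dtau_field R) tau0 rs)%E &
        (E_Sigma12 a psi (@dtau_field R) tau1 rs rt
           <= B%:E * E_Sigma a psi (@dtau_field R) tau0)%E].
Proof.
move=> /ltW rs_le_rt psi_C2 psi_wave _.
have [_ [[_ ct cr] _]] := psi_C2.
have le_E := le_integral_profiles (continuous_null_profile (c := 1) ct cr)
  (continuous_null_profile (c := -1) ct cr) (fun x => sqr_ge0 _) (fun x => sqr_ge0 _).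
exists 1 => tau1 t01; rewrite !mul1e.
rewrite !(E_Sigma12_null psi_C2 psi_wave) // !(E_Sigma1_null psi_C2 psi_wave).
rewrite (E_Sigma_null psi_C2 psi_wave).
split; apply: le_E => //; try exact: subsetT.
- by apply: subset_itvl; rewrite bnd_simp; lra.
- by apply: subset_itvr; rewrite bnd_simp; lra.
- by apply: subset_itvr; rewrite bnd_simp; lra.
Qed.
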